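(* Let $R=R_0\oplus R_1\oplus\cdots\oplus R_{p-1}$ be a commutative $\mathbb Z/p\mathbb Z$-graded $F$-algebra and $I=\sum_{i+j=p}R_iR_j\subset R_0$ (sum over $1\le i,j\le p-1$). The following are equivalent: (1) $X^G=\emptyset$, where $X^G=\mathrm{Spec}(R_0/I)$; (2) $I=R_0$; (3) $R_i^p=R_0$ for all $i=1,\dots,p-1$; (4) $R_1^p=R_0$; (5) $R_iR_{p-i}=R_0$ for each $i=1,\dots,p-1$; (6) for all $k,l\in\{0,\dots,p-1\}$ the multiplication map $R_k\otimes_{R_0}R_l\to R_{k+l}$ (index mod $p$) is an isomorphism; (7) the homomorphism $\Phi:R\otimes_{R_0}R\to F[t]/(t^p-1)\otimes_F R$ given by $a_k\otimes b_l\mapsto t^k\otimes a_kb_l$ for $a_k\in R_k$, $b_l\in R_l$ is an isomorphism.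
   Context: $p$ is a prime and $F$ a field. A $\mathbb Z/p\mathbb Z$-grading of $R$ corresponds to an action of $G=\mu_p=\mathrm{Spec}\,F[t]/(t^p-1)$ on $X=\mathrm{Spec}\,R$, with coaction $r_0+\cdots+r_{p-1}\mapsto\sum_i t^i\otimes r_i$. $R_i^p$ denotes the additive subgroup of $R$ generated by products of $p$ elements of $R_i$ (it lies in $R_0$); $R_iR_j$ likewise denotes the additive span of products. *)

From HB Require Import structures.
From mathcomp Require Import all_boot all_order all_algebra.
Set Implicit Arguments. Unset Strict Implicit. Unset Printing Implicit Defensive.
Import GRing.Theory.
Local Open Scope ring_scope.

Section GradedDefs.
Variables (F : fieldType) (R : comAlgType F).

(* A Z/pZ-grading of the F-algebra R, given by the family of projections
   pr i : R -> R_i (i < p), i.e. r = r_0 + ... + r_{p-1} with r_i = pr i r.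
   (This is the same datum as the coaction r |-> sum_i t^i (x) r_i.) *)
Definition Zp_grading (p : nat) (pr : nat -> R -> R) : Prop :=
  [/\ forall i, (i < p)%N -> forall x y, pr i (x + y) = pr i x + pr i y,
      forall i, (i < p)%N -> forall (a : F) x, pr i (a *: x) = a *: pr i x,
      forall x, x = \sum_(i < p) pr i x,
      forall i j, (i < p)%N -> (j < p)%N -> forall x,
        pr i (pr j x) = (if i == j then pr j x else 0) &
      forall i j, (i < p)%N -> (j < p)%N -> forall x y,
        pr i x = x -> pr j y = y -> pr ((i + j) %% p)%N (x * y) = x * y].

Definition hcomp (pr : nat -> R -> R) (i : nat) : R -> Prop := fun x => pr i x = x.

Definition addspan (S : R -> Prop) : R -> Prop :=
  fun x => exists s : seq (int * R),
    (forall c, c \in s -> S c.2) /\ x = \sum_(c <- s) c.2 *~ c.1.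

Definition prodspan (A B : R -> Prop) : R -> Prop :=
  addspan (fun x => exists a b, [/\ A a, B b & x = a * b]).

Definition powspan (A : R -> Prop) (n : nat) : R -> Prop :=
  addspan (fun x => exists a : 'I_n -> R, (forall j, A (a j)) /\ x = \prod_(j < n) a j).

Definition fixed_ideal (p : nat) (pr : nat -> R -> R) : R -> Prop :=
  addspan (fun x => exists i a b,
    [/\ (0 < i < p)%N, hcomp pr i a, hcomp pr (p - i)%N b & x = a * b]).

Definition prime_ideal_in (S P : R -> Prop) : Prop :=
  [/\ forall x, P x -> S x, P 0, forall x y, P x -> P y -> P (x - y) &
      forall s x, S s -> P x -> P (s * x)] /\
  ~ P 1 /\ (forall x y, S x -> S y -> P (x * y) -> P x \/ P y).

(* Spec(S / I) = empty: no prime ideal of S/I, i.e. (correspondence theorem)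
   no prime ideal of S containing I. *)
Definition spec_quot_empty (S I : R -> Prop) : Prop :=
  ~ exists P, prime_ideal_in S P /\ (forall x, I x -> P x).

(* Tensor product A (x)_S B of S-modules A, B (sub-S-modules of R):
   formal sums (lists) of pairs (a, b), a in A, b in B, modulo the
   congruence generated by bilinearity and S-balancedness. *)
Inductive tens_equiv (S A B : R -> Prop) : seq (R * R) -> seq (R * R) -> Prop :=
| te_refl s : tens_equiv S A B s s
| te_sym s t : tens_equiv S A B s t -> tens_equiv S A B t s
| te_trans s t u : tens_equiv S A B s t -> tens_equiv S A B t u -> tens_equiv S A B s u
| te_cat s s' t t' : tens_equiv S A B s t -> tens_equiv S A B s' t' ->
    tens_equiv S A B (s ++ s') (t ++ t')
| te_swap s t : tens_equiv S A B (s ++ t) (t ++ s)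
| te_addl a a' b : A a -> A a' -> B b ->
    tens_equiv S A B [:: (a + a', b)] [:: (a, b); (a', b)]
| te_addr a b b' : A a -> B b -> B b' ->
    tens_equiv S A B [:: (a, b + b')] [:: (a, b); (a, b')]
| te_zerol b : B b -> tens_equiv S A B [:: (0, b)] [::]
| te_zeror a : A a -> tens_equiv S A B [:: (a, 0)] [::]
| te_bal s a b : S s -> A a -> B b ->
    tens_equiv S A B [:: (s * a, b)] [:: (a, s * b)].

Definition in_pairs (A B : R -> Prop) (s : seq (R * R)) : Prop :=
  forall x, x \in s -> A x.1 /\ B x.2.

(* The map A (x)_S B -> C induced by the balanced biadditive map phi
   (a (x) b |-> phi a b) is an isomorphism onto C. *)
Definition tensor_iso (S A B : R -> Prop) (T : zmodType) (phi : R -> R -> T)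
    (C : T -> Prop) : Prop :=
  [/\ forall s, in_pairs A B s -> C (\sum_(x <- s) phi x.1 x.2),
      forall c, C c -> exists s, in_pairs A B s /\ c = \sum_(x <- s) phi x.1 x.2 &
      forall s t, in_pairs A B s -> in_pairs A B t ->
        \sum_(x <- s) phi x.1 x.2 = \sum_(x <- t) phi x.1 x.2 ->
        tens_equiv S A B s t].

(* Phi : R (x)_{R_0} R -> F[t]/(t^p-1) (x)_F R, where the target is identified
   with {ffun 'I_p -> R} via the F-basis 1, t, ..., t^(p-1):
   a (x) b |-> sum_k t^k (x) a_k b. *)
Definition Phi_map (p : nat) (pr : nat -> R -> R) (a b : R) : {ffun 'I_p -> R} :=
  [ffun k : 'I_p => pr k a * b].

End GradedDefs.

From HB Require Import structures.
From mathcomp Require Import all_boot all_order all_algebra.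
From mathcomp Require Import zify ring.
From mathcomp Require Import boolp classical_sets.
Import GRing.Theory.
Set Implicit Arguments. Unset Strict Implicit.

(* Everything passes through the condition that [1] lies in [R_j R_(p-j)] for
   every [0 < j < p].  If [1] lies in [I] but not in [R_j R_(p-j)], some prime [P]
   of [R_0] contains [R_j R_(p-j)], while some generator [a b] of [I], with
   [a] in [R_i] and [b] in [R_(p-i)], avoids [P]; yet [(a b)^k = a^k b^k] lies in
   [R_j R_(p-j)] for [k i = j mod p], contradicting primality.  Conversely a
   decomposition [1 = sum_m u_m v_m] with [u_m] in [R_k] and [v_m] in [R_(-k)]
   yields the normal form [a (x) b ~ sum_m u_m (x) v_m a b] for [a] in [R_k]; it
   makes the multiplication maps and [Phi] injective, and it peels factors of
   [R_i] off any element of [R_0], so that [R_i^p = R_0]. *)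

Lemma eq_modn_addr p i j k : i < p -> j <= p -> k < p ->
  ((i + j) %% p == k) = (i == (k + (p - j)) %% p).
Proof.
move=> ip jp kp; rewrite -{1}(modn_small kp) -(eqn_modDr (p - j)) -addnA subnKC //.
by rewrite modnDr modn_small.
Qed.

Lemma modn_mul_solvable p i j : 0 < i -> coprime i p -> exists k, k * i = j %[mod p].
Proof.
move=> i0 /(coprimeP _ i0) [[u v] /= e]; exists (j * u).
have -> : j * u * i = j * v * p + j by nia.
by rewrite modnMDl.
Qed.

Lemma modn_mul_subn p k i j : i <= p -> j <= p ->
  k * i = j %[mod p] -> k * (p - i) = p - j %[mod p].
Proof.
move=> ip jp kij; apply/eqP; rewrite -(eqn_modDr j) subnK // -modnDmr -kij modnDmr.
by rewrite -mulnDr subnK // modnMl modnn.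
Qed.

Local Open Scope ring_scope.

Lemma zmod_closedMz (V : zmodType) (Q : V -> Prop) :
  Q 0 -> (forall x y, Q x -> Q y -> Q (x - y)) -> forall x n, Q x -> Q (x *~ n).
Proof.
move=> Q0 QB x n Qx.
have QN y : Q y -> Q (- y) by move=> /(QB 0 y Q0); rewrite sub0r.
have QMn m : Q (x *+ m).
  elim: m => [|m IH]; first by rewrite mulr0n.
  by rewrite mulrS -[X in _ + X]opprK; apply: QB => //; apply: QN.
by case: n => m; [exact: QMn | rewrite NegzE mulrNz; exact/QN/QMn].
Qed.

Lemma unit_sum_expand (R : comPzRingType) (U : seq (R * R)) x :
  1 = \sum_(c <- U) c.1 * c.2 -> x = \sum_(c <- U) c.1 * (c.2 * x).
Proof.
move=> eU; rewrite -[LHS]mul1r eU mulr_suml.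
by apply: eq_bigr => c _; rewrite mulrA.
Qed.

Section TensorEquiv.
Variables (F : fieldType) (R : comAlgType F) (S A B : R -> Prop).
Local Notation TE := (tens_equiv S A B).

Lemma te_interchange (x X y Y : seq (R * R)) :
  TE ((x ++ X) ++ (y ++ Y)) ((x ++ y) ++ (X ++ Y)).
Proof.
rewrite -!catA; apply: te_cat; first exact: te_refl.
by rewrite !catA; apply: te_cat; [exact: te_swap | exact: te_refl].
Qed.

Lemma te_flatten (I : eqType) (l : seq I) (f g : I -> seq (R * R)) :
  (forall i, i \in l -> TE (f i) (g i)) ->
  TE (flatten (map f l)) (flatten (map g l)).
Proof.
elim: l => [|i l IH] h /=; first exact: te_refl.
apply: te_cat; first by apply: h; rewrite mem_head.
by apply: IH => j jl; apply: h; rewrite inE jl orbT.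
Qed.

Lemma te_flatten_cat (I : Type) (l : seq I) (f g : I -> seq (R * R)) :
  TE (flatten (map f l) ++ flatten (map g l)) (flatten (map (fun i => f i ++ g i) l)).
Proof.
elim: l => [|i l IH] /=; first exact: te_refl.
exact: te_trans (te_interchange _ _ _ _) (te_cat (te_refl _ _ _ _) IH).
Qed.

Lemma te_map (I : eqType) (l : seq I) (f g : I -> R * R) :
  (forall i, i \in l -> TE [:: f i] [:: g i]) -> TE (map f l) (map g l).
Proof. by move=> h; rewrite -(flatten_map1 f) -(flatten_map1 g); apply: te_flatten. Qed.

Lemma te_flatten_nil (I : eqType) (l : seq I) (f : I -> seq (R * R)) :
  (forall i, i \in l -> TE [::] (f i)) -> TE [::] (flatten (map f l)).
Proof.
elim: l => [|i l IH] h /=; first exact: te_refl.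
apply: (@te_cat _ _ _ _ _ [::] [::]); first by apply: h; rewrite mem_head.
by apply: IH => j jl; apply: h; rewrite inE jl orbT.
Qed.

Lemma te_addl_sum (ys : seq R) b :
  A 0 -> (forall x y, A x -> A y -> A (x + y)) -> B b ->
  (forall y, y \in ys -> A y) ->
  TE [:: (\sum_(y <- ys) y, b)] [seq (y, b) | y <- ys].
Proof.
move=> A0 AD Bb; elim: ys => [|y ys IH] h /=.
  by rewrite big_nil; exact: te_zerol.
have Ay : A y by apply: h; rewrite mem_head.
have Ays z : z \in ys -> A z by move=> zs; apply: h; rewrite inE zs orbT.
have Asum : A (\sum_(z <- ys) z) by rewrite big_seq; apply: big_ind.
rewrite big_cons; apply: te_trans (te_addl S Ay Asum Bb) _.
exact: (@te_cat _ _ _ _ _ [:: _] _ [:: _]) (te_refl _ _ _ _) (IH Ays).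
Qed.

(* With [1 = sum_(u, v) u v], [tens_scale U c] is a normal form for the tensors
   whose product is [c]. *)
Definition tens_scale (U : seq (R * R)) (c : R) := [seq (uv.1, uv.2 * c) | uv <- U].

Lemma te_scale0 U : (forall uv, uv \in U -> A uv.1) -> TE [::] (tens_scale U 0).
Proof.
elim: U => [|uv U IH] h /=; first exact: te_refl.
rewrite mulr0; apply: (@te_cat _ _ _ _ _ [::] [::] [:: _]).
  by apply/te_sym/te_zeror; apply: h; rewrite mem_head.
by apply: IH => w ws; apply: h; rewrite inE ws orbT.
Qed.

Lemma te_scaleD U c d :
  (forall uv, uv \in U -> [/\ A uv.1, B (uv.2 * c) & B (uv.2 * d)]) ->
  TE (tens_scale U c ++ tens_scale U d) (tens_scale U (c + d)).
Proof.
elim: U => [|uv U IH] h /=; first exact: te_refl.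
have [Au Bc Bd] := h uv (mem_head _ _).
apply: te_trans (te_interchange [:: _] _ [:: _] _) _.
apply: (@te_cat _ _ _ _ _ [:: _; _] _ [:: _]).
  by rewrite mulrDr; apply/te_sym/te_addr.
by apply: IH => w ws; apply: h; rewrite inE ws orbT.
Qed.

(* Split [x] as [sum_(u, v) u (v x)] and move each scalar [v x] of [S] across. *)
Lemma te_pair_scale (U : seq (R * R)) x b :
  A 0 -> (forall y z, A y -> A z -> A (y + z)) -> B b ->
  (forall uv, uv \in U -> [/\ A uv.1, A (uv.1 * (uv.2 * x)) & S (uv.2 * x)]) ->
  x = \sum_(uv <- U) uv.1 * (uv.2 * x) ->
  TE [:: (x, b)] (tens_scale U (x * b)).
Proof.
move=> A0 AD Bb hU ex.
rewrite {1}ex -(big_map (fun uv => uv.1 * (uv.2 * x)) predT id).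
apply: te_trans (te_addl_sum A0 AD Bb _) _.
  by move=> y /mapP [uv uvU ->]; have [] := hU uv uvU.
rewrite /tens_scale -map_comp; apply: te_map => uv uvU /=.
have [Au _ Svx] := hU uv uvU.
by rewrite mulrC mulrA; exact: te_bal.
Qed.

Section NormalForm.
Variables (T : zmodType) (phi : R -> R -> T) (D : T -> Prop) (C : T -> seq (R * R)).
Hypotheses (D0 : D 0) (DD : forall x y, D x -> D y -> D (x + y)).
Hypothesis Dphi : forall a b, A a -> B b -> D (phi a b).
Hypotheses (C0 : TE [::] (C 0)) (CD : forall x y, D x -> D y -> TE (C x ++ C y) (C (x + y))).
Hypothesis Cphi : forall a b, A a -> B b -> TE [:: (a, b)] (C (phi a b)).

Lemma te_normal_form s : in_pairs A B s ->
  D (\sum_(x <- s) phi x.1 x.2) /\ TE s (C (\sum_(x <- s) phi x.1 x.2)).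
Proof.
elim: s => [|[a b] s IH] hs; first by rewrite big_nil.
have [Aa Bb] := hs _ (mem_head _ _).
have [Ds TEs] := IH (fun z zs => hs z (@mem_behead _ ((a, b) :: s) z zs)).
rewrite big_cons /=; split; first exact: DD (Dphi Aa Bb) Ds.
apply: te_trans (CD (Dphi Aa Bb) Ds).
exact: (@te_cat _ _ _ _ _ [:: _] _ _ _ (Cphi Aa Bb) TEs).
Qed.

Lemma te_sum_inj s t : in_pairs A B s -> in_pairs A B t ->
  \sum_(x <- s) phi x.1 x.2 = \sum_(x <- t) phi x.1 x.2 -> TE s t.
Proof.
move=> hs ht e; have [_ TEs] := te_normal_form hs; have [_ TEt] := te_normal_form ht.
by rewrite e in TEs; exact: te_trans TEs (te_sym TEt).
Qed.

End NormalForm.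
End TensorEquiv.

Section AddSpan.
Variables (F : fieldType) (R : comAlgType F).

Lemma addspan_sub (S : R -> Prop) x : S x -> addspan S x.
Proof.
move=> Sx; exists [:: (1%:Z, x)]; split; last by rewrite big_seq1.
by move=> c; rewrite inE => /eqP ->.
Qed.

Lemma addspan_ind (S Q : R -> Prop) :
  Q 0 -> (forall x y, Q x -> Q y -> Q (x + y)) -> (forall x n, S x -> Q (x *~ n)) ->
  forall x, addspan S x -> Q x.
Proof.
move=> Q0 QD QMz x [s [hs ->]]; rewrite big_seq; apply: big_ind => // c cs.
exact/QMz/hs.
Qed.

Lemma addspan0 (S : R -> Prop) : addspan S 0.
Proof. by exists [::]; split; rewrite ?big_nil. Qed.

Lemma addspanD (S : R -> Prop) x y : addspan S x -> addspan S y -> addspan S (x + y).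
Proof.
move=> [s [hs ->]] [t [ht ->]]; exists (s ++ t); split; last by rewrite big_cat.
by move=> c; rewrite mem_cat => /orP [/hs|/ht].
Qed.

Lemma addspanB (S : R -> Prop) x y : addspan S x -> addspan S y -> addspan S (x - y).
Proof.
move=> hx [t [ht ->]]; apply: addspanD hx _.
exists [seq (- c.1, c.2) | c <- t]; split; first by move=> c /mapP [d /ht dt ->].
by rewrite big_map -sumrN; apply: eq_bigr => c _; rewrite mulrNz.
Qed.

Lemma addspan_mull (S S' : R -> Prop) s x : (forall y, S y -> S' (s * y)) ->
  addspan S x -> addspan S' (s * x).
Proof.
move=> hS [l [hl ->]]; exists [seq (c.1, s * c.2) | c <- l]; split.
  by move=> c /mapP [d /hl dl ->]; apply: hS.
by rewrite big_map mulr_sumr; apply: eq_bigr => c _; rewrite mulrzAr.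
Qed.

Lemma prodspanP (A B : R -> Prop) x :
  (forall a n, A a -> A (a *~ n)) -> prodspan A B x ->
  exists s, in_pairs A B s /\ x = \sum_(c <- s) c.1 * c.2.
Proof.
move=> AMz [l [hl ->]]; elim: l hl => [|c l IH] hl.
  by exists [::]; split; rewrite ?big_nil.
have [a [b [Aa Bb e]]] := hl c (mem_head _ _).
have [s [hs es]] := IH (fun d dl => hl d (@mem_behead _ (c :: l) d dl)).
exists ((a *~ c.1, b) :: s); split; last by rewrite !big_cons es e mulrzAl.
by move=> d; rewrite inE => /orP [/eqP -> /=|/hs]; first by split=> //; apply: AMz.
Qed.

Lemma prodspan_sum (A B : R -> Prop) s :
  in_pairs A B s -> prodspan A B (\sum_(c <- s) c.1 * c.2).
Proof.
move=> hs; rewrite big_seq; apply: big_ind => [|x y|c cs]; first exact: addspan0.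
  exact: addspanD.
by apply: addspan_sub; have [Ac Bc] := hs c cs; exists c.1, c.2.
Qed.

Lemma powspan_mull (A : R -> Prop) n u y :
  A u -> powspan A n y -> powspan A n.+1 (u * y).
Proof.
move=> Au; apply: addspan_mull => _ [a [ha ->]].
exists (fun j : 'I_n.+1 => if unlift ord0 j is Some j' then a j' else u); split.
  by move=> j; case: unlift.
by rewrite big_ord_recl unlift_none; congr (_ * _); apply: eq_bigr => j _; rewrite liftK.
Qed.

End AddSpan.

Section SubringIdeals.
Variables (F : fieldType) (R : comAlgType F) (S : R -> Prop).

Definition ideal_in (I : R -> Prop) :=
  [/\ forall x, I x -> S x, I 0, forall x y, I x -> I y -> I (x - y) &
      forall s x, S s -> I x -> I (s * x)].

Lemma idealD I x y : ideal_in I -> I x -> I y -> I (x + y).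
Proof.
move=> [_ I0 IB _] Ix Iy; have := IB x (0 - y) Ix (IB 0 y I0 Iy).
by rewrite sub0r opprK.
Qed.

Lemma idealMz I x n : ideal_in I -> I x -> I (x *~ n).
Proof. by case=> _ I0 IB _; exact: zmod_closedMz. Qed.

Lemma ideal_eq_of_one I : ideal_in I -> I 1 -> forall x, I x <-> S x.
Proof. by move=> [IS _ _ IM] I1 x; split=> [/IS //|Sx]; rewrite -[x]mulr1; exact: IM. Qed.

Definition proper_ideal_over (J M : R -> Prop) :=
  [/\ ideal_in M, forall x, J x -> M x & ~ M 1].

Lemma proper_ideal_chain_union J (C : set (set R)) X0 x0 :
  C X0 -> X0 x0 -> (forall X x, C X -> X x -> proper_ideal_over J X) ->
  total_on C subset -> proper_ideal_over J (\bigcup_(X in C) X)%classic.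
Proof.
move=> CX0 X0x0 hC Ctot; have [[_ X00 _ _] JX0 _] := hC X0 x0 CX0 X0x0.
split; last by move=> [X CX X1]; have [_ _] := hC X 1 CX X1.
- split.
  + by move=> x [X CX Xx]; have [[XS _ _ _] _ _] := hC X x CX Xx; exact: XS.
  + by exists X0.
  + move=> x y [X CX Xx] [Y CY Yy].
    have [XY|YX] := Ctot X Y CX CY.
      by exists Y => //; have [[_ _ YB _] _ _] := hC Y y CY Yy; exact: YB (XY _ Xx) Yy.
    by exists X => //; have [[_ _ XB _] _ _] := hC X x CX Xx; exact: XB Xx (YX _ Yy).
  + move=> s x Ss [X CX Xx]; exists X => //.
    by have [[_ _ _ XM] _ _] := hC X x CX Xx; exact: XM.
- by move=> x /JX0; exists X0.
Qed.

Lemma exists_maximal_ideal_over J : ideal_in J -> ~ J 1 ->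
  exists M, proper_ideal_over J M /\
    forall N, (M `<` N)%classic -> ~ proper_ideal_over J N.
Proof.
move=> Jideal nJ1.
(* [set0] is admitted only so that the empty chain has an upper bound. *)
pose P (X : set R) := X = set0 \/ proper_ideal_over J X.
have [M [[M0|PM] Mmax]] : exists M, P M /\ forall N, (M `<` N)%classic -> ~ P N.
- apply: Zorn_bigcup => C CP Ctot.
  have [[X0 [x0 [CX0 X0x0]]]|none] := pselect (exists X x, C X /\ X x).
    right; apply: proper_ideal_chain_union CX0 X0x0 _ Ctot => X x CX Xx.
    by case: (CP X CX) => // Xnil; rewrite Xnil in Xx.
  by left; apply/seteqP; split=> // x [X CX Xx]; apply: none; exists X, x.
- exfalso; apply: (Mmax J); last by right; split.
  by rewrite M0; split=> // J0; case: Jideal => _ /J0.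
- by exists M; split=> // N MN PN; apply: (Mmax N MN); right.
Qed.

Hypotheses (S1 : S 1) (SB : forall x y, S x -> S y -> S (x - y)).
Hypothesis SM : forall x y, S x -> S y -> S (x * y).

Lemma subring0 : S 0. Proof. by have := SB S1 S1; rewrite subrr. Qed.

Lemma subringD x y : S x -> S y -> S (x + y).
Proof. by move=> Sx Sy; have := SB Sx (SB subring0 Sy); rewrite sub0r opprK. Qed.

Lemma ideal_addspan G : (forall x, G x -> S x) ->
  (forall s x, S s -> G x -> G (s * x)) -> ideal_in (addspan G).
Proof.
move=> GS GM; split.
- apply: addspan_ind => [|x y|x n /GS Sx]; first exact: subring0.
    exact: subringD.
  exact: zmod_closedMz subring0 SB x n Sx.
- exact: addspan0.
- by move=> x y; apply: addspanB.
- by move=> s x Ss; apply: addspan_mull => y; apply: GM.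
Qed.

Lemma prime_idealX P x k : prime_ideal_in S P -> S x -> P (x ^+ k.+1) -> P x.
Proof.
move=> [_ [_ Pprime]] Sx; have SX m : S (x ^+ m).
  by elim: m => [|m IHm]; rewrite ?expr0 // exprS; exact: SM.
elim: k => [|k IH]; first by rewrite expr1.
by rewrite exprS => /(Pprime _ _ Sx (SX _)) [//|]; exact: IH.
Qed.

Definition ideal_adjoin (M : R -> Prop) z : R -> Prop :=
  fun w => exists m r, [/\ M m, S r & w = m + r * z].

Lemma ideal_adjoin_sub M z x : M x -> ideal_adjoin M z x.
Proof. by move=> Mx; exists x, 0; split; rewrite ?mul0r ?addr0 //; exact: subring0. Qed.

Lemma ideal_adjoin_ideal M z : ideal_in M -> S z -> ideal_in (ideal_adjoin M z).
Proof.
move=> [MS M0 MB MM] Sz; split.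
- by move=> w [m [r [Mm Sr ->]]]; apply: subringD (MS _ Mm) (SM Sr Sz).
- exact: ideal_adjoin_sub.
- move=> x y [m1 [r1 [M1 Sr1 ->]]] [m2 [r2 [M2 Sr2 ->]]].
  exists (m1 - m2), (r1 - r2); split; [exact: MB | exact: SB |].
  by rewrite mulrBl opprD addrACA.
- move=> s x Ss [m [r [Mm Sr ->]]]; exists (s * m), (s * r); split.
  + exact: MM.
  + exact: SM.
  + by rewrite mulrDr mulrA.
Qed.

Lemma maximal_ideal_prime J M : proper_ideal_over J M ->
  (forall N, (M `<` N)%classic -> ~ proper_ideal_over J N) -> prime_ideal_in S M.
Proof.
move=> [Mideal JM nM1] Mmax; split=> //; split=> // x y Sx Sy Mxy.
have [MS _ _ MM] := Mideal.
have adjoin_one z : S z -> ~ M z -> ideal_adjoin M z 1.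
  move=> Sz nMz; apply: contrapT => n1; apply: (Mmax (ideal_adjoin M z)).
    split; first by move=> w; exact: ideal_adjoin_sub.
    move=> sub; apply/nMz/sub; exists 0, 1; split; rewrite ?mul1r ?add0r //.
    by case: Mideal.
  split=> [|w /JM|//]; [exact: ideal_adjoin_ideal | exact: ideal_adjoin_sub].
have [Mx|nMx] := pselect (M x); first by left.
have [My|nMy] := pselect (M y); first by right.
have [m1 [r1 [M1 Sr1 e1]]] := adjoin_one x Sx nMx.
have [m2 [r2 [M2 Sr2 e2]]] := adjoin_one y Sy nMy.
exfalso; apply: nM1.
have -> : 1 = (m2 + r2 * y) * m1 + (r1 * x) * m2 + (r1 * r2) * (x * y).
  have -> : (m2 + r2 * y) * m1 + (r1 * x) * m2 + (r1 * r2) * (x * y)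
          = (m1 + r1 * x) * (m2 + r2 * y) by ring.
  by rewrite -e1 -e2 mulr1.
apply: idealD Mideal (idealD Mideal _ _) _; apply: MM => //.
- exact: subringD (MS _ M2) (SM Sr2 Sy).
- exact: SM.
- exact: SM.
Qed.

Lemma exists_prime_ideal_over J : ideal_in J -> ~ J 1 ->
  exists P, prime_ideal_in S P /\ forall x, J x -> P x.
Proof.
move=> Jideal nJ1; have [M [[Mideal JM nM1] Mmax]] := exists_maximal_ideal_over Jideal nJ1.
by exists M; split=> //; apply: maximal_ideal_prime Mmax.
Qed.

Lemma spec_quot_emptyP I : ideal_in I -> spec_quot_empty S I <-> I 1.
Proof.
move=> Iideal; split=> [h|I1 [P [[_ [nP1 _]] IP]]]; last exact: nP1 (IP _ I1).
by apply: contrapT => nI1; apply: h; exact: exists_prime_ideal_over.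
Qed.

End SubringIdeals.

Section Grading.
Variables (F : fieldType) (R : comAlgType F) (p : nat) (pr : nat -> R -> R).
Hypotheses (p_gt0 : (0 < p)%N) (grading : Zp_grading p pr).
Local Notation H := (hcomp pr).

Lemma prD i : (i < p)%N -> {morph pr i : x y / x + y}.
Proof. by case: grading => h _ _ _ _; exact: h. Qed.

Lemma decomp_pr x : x = \sum_(i < p) pr i x.
Proof. by case: grading => _ _ h _ _; exact: h. Qed.

Lemma pr_pr i j x : (i < p)%N -> (j < p)%N -> pr i (pr j x) = if i == j then pr j x else 0.
Proof. by case: grading => _ _ _ h _ ip jp; exact: h. Qed.

Lemma hcompM i j x y : (i < p)%N -> (j < p)%N -> H i x -> H j y -> H ((i + j) %% p)%N (x * y).
Proof. by case: grading => _ _ _ _ h ip jp; exact: h. Qed.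

Lemma pr0 i : (i < p)%N -> pr i 0 = 0.
Proof. by move=> ip; apply/(addrI (pr i 0)); rewrite -prD // !addr0. Qed.

Lemma prB i : (i < p)%N -> {morph pr i : x y / x - y}.
Proof.
move=> ip x y; apply/(addrI (pr i y)).
by rewrite -prD // [y + _]addrC subrK [RHS]addrC subrK.
Qed.

Lemma pr_sum i (I : Type) (s : seq I) (f : I -> R) : (i < p)%N ->
  pr i (\sum_(x <- s) f x) = \sum_(x <- s) pr i (f x).
Proof. by move=> ip; rewrite (big_morph _ (prD ip) (pr0 ip)). Qed.

Lemma hcomp0 i : (i < p)%N -> H i 0.
Proof. exact: pr0. Qed.

Lemma hcompB i x y : (i < p)%N -> H i x -> H i y -> H i (x - y).
Proof. by move=> ip hx hy; rewrite /hcomp prB // hx hy. Qed.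

Lemma hcompD i x y : (i < p)%N -> H i x -> H i y -> H i (x + y).
Proof. by move=> ip hx hy; rewrite /hcomp prD // hx hy. Qed.

Lemma hcompMz i x n : (i < p)%N -> H i x -> H i (x *~ n).
Proof. by move=> ip; apply: (@zmod_closedMz _ (H i) (hcomp0 ip) (fun x y => @hcompB i x y ip)). Qed.

Lemma hcomp_pr i x : (i < p)%N -> H i (pr i x).
Proof. by move=> ip; rewrite /hcomp pr_pr // eqxx. Qed.

Lemma pr_hcomp i j x : (i < p)%N -> (j < p)%N -> H j x -> pr i x = if i == j then x else 0.
Proof. by move=> ip jp hx; rewrite -hx pr_pr // hx. Qed.

Lemma hcompM_mod i j k x y : (i < p)%N -> (j < p)%N -> (k < p)%N ->
  (i + j = k %[mod p])%N -> H i x -> H j y -> H k (x * y).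
Proof. by move=> ip jp kp ijk hx hy; have := hcompM ip jp hx hy; rewrite ijk modn_small. Qed.

Lemma hcompM0l i s x : (i < p)%N -> H 0 s -> H i x -> H i (s * x).
Proof. by move=> ip; apply: hcompM_mod. Qed.

Lemma hcomp_mul_compl i a b : (0 < i < p)%N -> H i a -> H (p - i) b -> H 0 (a * b).
Proof.
move=> /andP [i0 ip]; apply: hcompM_mod => //; first by rewrite ltn_subrL i0.
by rewrite (subnKC (ltnW ip)) modnn mod0n.
Qed.

(* [pr 0 1] acts as the identity on every homogeneous element, hence on [1]. *)
Lemma hcomp1 : H 0 1.
Proof.
have pr01_mul j x : (j < p)%N -> H j x -> pr 0 1 * x = x.
  move=> jp hx.
  have {2}-> : x = \sum_(i < p) pr j (pr i 1 * x).
    by rewrite -pr_sum // -mulr_suml -decomp_pr mul1r hx.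
  rewrite (bigD1 (Ordinal p_gt0)) //= big1 ?addr0; first exact/esym/hcompM0l/hx/hcomp_pr.
  move=> i; rewrite -val_eqE /= => /negbTE ni0.
  rewrite (pr_hcomp jp (ltn_pmod _ p_gt0) (hcompM (ltn_ord i) jp (hcomp_pr _ (ltn_ord i)) hx)).
  by rewrite eq_sym (eq_modn_addr (ltn_ord i) (ltnW jp) jp) (subnKC (ltnW jp)) modnn ni0.
rewrite /hcomp -[LHS]mulr1 {2}(decomp_pr 1) mulr_sumr [RHS](decomp_pr 1).
by apply: eq_bigr => i _; apply: pr01_mul (ltn_ord i) (hcomp_pr _ (ltn_ord i)).
Qed.

Lemma hcompX i j k a : (i < p)%N -> (j < p)%N -> (k * i = j %[mod p])%N ->
  H i a -> H j (a ^+ k).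
Proof.
move=> ip jp kij ha; rewrite -(modn_small jp) -kij.
elim: k {kij} => [|k IH]; first by rewrite expr0 mul0n mod0n; exact: hcomp1.
rewrite exprS; apply: hcompM_mod ha IH => //; try exact: ltn_pmod.
by rewrite modnDmr modn_mod mulSn.
Qed.

Lemma hcomp_prod i n (a : 'I_n -> R) : (i < p)%N -> (forall j, H i (a j)) ->
  H ((n * i) %% p)%N (\prod_(j < n) a j).
Proof.
move=> ip; elim: n a => [|n IH] a ha; first by rewrite big_ord0 mul0n mod0n; exact: hcomp1.
rewrite big_ord_recl; apply: hcompM_mod (ha ord0) (IH _ (fun j => ha _)) => //; try exact: ltn_pmod.
by rewrite modnDmr modn_mod mulSn.
Qed.

Lemma hcomp_compl_mul k l v c : (k < p)%N -> (l < p)%N ->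
  H ((p - k) %% p)%N v -> H ((k + l) %% p)%N c -> H l (v * c).
Proof.
move=> kp lp; apply: hcompM_mod => //; try exact: ltn_pmod.
by rewrite modnDm addnA (subnK (ltnW kp)) modnDl.
Qed.

Lemma pr0_mul_hcomp i x y : (0 < i < p)%N -> H i x -> pr 0 (x * y) = x * pr (p - i) y.
Proof.
move=> hi hx; have /andP [i0 ip] := hi; have pip : (p - i < p)%N by rewrite ltn_subrL i0.
rewrite {1}(decomp_pr y) mulr_sumr pr_sum // (bigD1 (Ordinal pip)) //= big1 ?addr0.
  exact: hcomp_mul_compl hi hx (hcomp_pr _ pip).
move=> l; rewrite -val_eqE /= => /negbTE nl.
rewrite (pr_hcomp p_gt0 (ltn_pmod _ p_gt0) (hcompM ip (ltn_ord l) hx (hcomp_pr _ (ltn_ord l)))).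
by rewrite eq_sym addnC (eq_modn_addr (ltn_ord l) (ltnW ip) p_gt0) add0n (modn_small pip) nl.
Qed.

Lemma hcomp0B x y : H 0 x -> H 0 y -> H 0 (x - y).
Proof. exact: hcompB. Qed.

Lemma hcomp0M x y : H 0 x -> H 0 y -> H 0 (x * y).
Proof. exact: hcompM0l. Qed.

Lemma fixed_ideal_ideal : ideal_in (H 0) (fixed_ideal p pr).
Proof.
apply: (ideal_addspan (S := H 0) hcomp1 hcomp0B) => [x [i [a [b [hi ha hb ->]]]]|s x hs].
  exact: hcomp_mul_compl hi ha hb.
move=> [i [a [b [hi ha hb ->]]]]; exists i, (s * a), b; split=> //; last by rewrite mulrA.
by case/andP: hi => _ ip; exact: hcompM0l.
Qed.

Lemma spec_quot_empty_fixed_idealP :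
  spec_quot_empty (H 0) (fixed_ideal p pr) <-> fixed_ideal p pr 1.
Proof. exact: (spec_quot_emptyP (S := H 0) hcomp1 hcomp0B hcomp0M fixed_ideal_ideal). Qed.

Lemma prodspan_compl_ideal i : (0 < i < p)%N -> ideal_in (H 0) (prodspan (H i) (H (p - i))).
Proof.
move=> hi; apply: (ideal_addspan (S := H 0) hcomp1 hcomp0B) => [x [a [b [ha hb ->]]]|s x hs].
  exact: hcomp_mul_compl hi ha hb.
move=> [a [b [ha hb ->]]]; exists (s * a), b; split=> //; last by rewrite mulrA.
by case/andP: hi => _ ip; exact: hcompM0l.
Qed.

Lemma powspan_hcomp0 i x : (i < p)%N -> powspan (H i) p x -> H 0 x.
Proof.
move=> ip; move: x; apply: addspan_ind => [|x y|_ n [a [ha ->]]].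
- exact: hcomp0.
- exact: hcompD.
- by apply: hcompMz => //; have := hcomp_prod ip ha; rewrite modnMr.
Qed.

Lemma one_in_prodspans_of_mul_iso :
  (forall k l, (k < p)%N -> (l < p)%N ->
     tensor_iso (H 0) (H k) (H l) *%R (H ((k + l) %% p)%N)) ->
  forall j, (0 < j < p)%N -> prodspan (H j) (H (p - j)) 1.
Proof.
move=> mul_iso j /andP [j0 jp]; have pjp : (p - j < p)%N by rewrite ltn_subrL j0.
have [_ onto _] := mul_iso j (p - j)%N jp pjp.
have [|s [hs ->]] := onto 1; last exact: prodspan_sum.
by rewrite (subnKC (ltnW jp)) modnn; exact: hcomp1.
Qed.

Section PrimeDegree.
Hypothesis p_prime : prime p.
Let p_gt1 : (1 < p)%N := prime_gt1 p_prime.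

Lemma one_in_prodspans_of_fixed_ideal : fixed_ideal p pr 1 ->
  forall j, (0 < j < p)%N -> prodspan (H j) (H (p - j)) 1.
Proof.
move=> I1 j hj; have /andP [j0 jp] := hj; apply: contrapT => nJ1.
have [P [Pprime JP]] :=
  exists_prime_ideal_over (S := H 0) hcomp1 hcomp0B hcomp0M (prodspan_compl_ideal hj) nJ1.
have [Pideal [nP1 _]] := Pprime.
have [i [a [b [hi ha hb nPab]]]] :
    exists i a b, [/\ (0 < i < p)%N, H i a, H (p - i) b & ~ P (a * b)].
  apply: contrapT => none; apply: nP1; move: I1.
  apply: addspan_ind => [|x y|_ n [i [a [b [hi ha hb ->]]]]]; first by case: Pideal.
    exact: idealD Pideal.
  by apply: idealMz Pideal _; apply: contrapT => nP; apply: none; exists i, a, b.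
have /andP [i0 ip] := hi; have pip : (p - i < p)%N by rewrite ltn_subrL i0.
have cop : coprime i p by rewrite coprime_sym prime_coprime // gtnNdvd.
have [[|k] ki] := modn_mul_solvable j i0 cop.
  by move: j0; rewrite mul0n mod0n modn_small // in ki; rewrite -ki.
have kpi := modn_mul_subn (ltnW ip) (ltnW jp) ki.
apply: nPab; apply: (prime_idealX (k := k) hcomp1 hcomp0M Pprime (hcomp_mul_compl hi ha hb)).
apply: JP; rewrite exprMn; apply: addspan_sub; exists (a ^+ k.+1), (b ^+ k.+1).
have pjp : (p - j < p)%N by rewrite ltn_subrL j0.
by split=> //; [exact: hcompX ip jp ki ha | exact: hcompX pip pjp kpi hb].
Qed.

Lemma prod_hcomp1_fixed_ideal n (a : 'I_n -> R) : n = p -> (forall j, H 1 (a j)) ->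
  fixed_ideal p pr (\prod_(j < n) a j).
Proof.
case: n a => [|n] a np ha; first by move: p_gt0; rewrite -np.
rewrite big_ord_recl; apply: addspan_sub.
exists 1%N, (a ord0), (\prod_(j < n) a (lift ord0 j)); split=> //.
have := hcomp_prod p_gt1 (fun j => ha (lift ord0 j)).
by rewrite muln1 modn_small -np ?subSS ?subn0.
Qed.

Lemma powspan1_fixed_ideal x : powspan (H 1) p x -> fixed_ideal p pr x.
Proof.
move: x; apply: addspan_ind => [|x y|_ n [a [ha ->]]]; first exact: addspan0.
  exact: addspanD.
by apply: idealMz fixed_ideal_ideal _; exact: prod_hcomp1_fixed_ideal.
Qed.

Lemma fixed_ideal_one_of_Phi_iso :
  tensor_iso (H 0) (fun _ => True) (fun _ => True) (Phi_map p pr) (fun _ => True) ->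
  fixed_ideal p pr 1.
Proof.
move=> [_ onto _]; pose o1 := Ordinal p_gt1.
have [s [_ e]] := onto [ffun k => if k == o1 then 1 else 0] I.
have := congr1 (fun g : {ffun 'I_p -> R} => g o1) e.
rewrite /= ffunE eqxx sum_ffunE => e1.
have -> : 1 = pr 0 (\sum_(x <- s) pr 1 x.1 * x.2).
  by rewrite -hcomp1 e1; congr (pr 0 _); apply: eq_bigr => x _; rewrite ffunE.
rewrite pr_sum // big_seq; apply: big_ind => [|x y|x _]; first exact: addspan0.
  exact: addspanD.
apply: addspan_sub; exists 1%N, (pr 1 x.1), (pr (p - 1) x.2); split.
- exact: p_gt1.
- exact: hcomp_pr.
- by apply: hcomp_pr; rewrite ltn_subrL.
- by rewrite (pr0_mul_hcomp (i := 1)) //; exact: hcomp_pr.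
Qed.

End PrimeDegree.

Definition unit_partition k (U : seq (R * R)) :=
  in_pairs (H k) (H ((p - k) %% p)%N) U /\ 1 = \sum_(c <- U) c.1 * c.2.

Lemma hcomp_pair_scale (A B : R -> Prop) k U a b : (k < p)%N -> unit_partition k U ->
  (forall x, H k x -> A x) -> (forall x y, A x -> A y -> A (x + y)) -> B b -> H k a ->
  tens_equiv (H 0) A B [:: (a, b)] (tens_scale U (a * b)).
Proof.
move=> kp [hU eU] HA AD Bb ha.
have hUa uv : uv \in U -> [/\ A uv.1, A (uv.1 * (uv.2 * a)) & H 0 (uv.2 * a)].
  move=> uvU; have [hu hv] := hU uv uvU.
  have hva : H 0 (uv.2 * a) by apply: (hcomp_compl_mul kp p_gt0 hv); rewrite addn0 modn_small.
  by split=> //; apply: HA; [exact: hu | rewrite mulrC; exact: hcompM0l].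
exact: te_pair_scale (HA _ (hcomp0 kp)) AD Bb hUa (unit_sum_expand a eU).
Qed.

Lemma pr_scale_sum j k U c : (j < p)%N -> (k < p)%N -> unit_partition k U ->
  \sum_(uv <- U) pr j uv.1 * (uv.2 * c) = if j == k then c else 0.
Proof.
move=> jp kp [hU eU]; rewrite big_seq.
under eq_bigr => uv uvU do rewrite (pr_hcomp jp kp (hU uv uvU).1).
case: (j =P k) => _ /=; last by rewrite big1 // => uv _; rewrite mul0r.
by rewrite -big_seq -unit_sum_expand.
Qed.

Definition Phi_nf (U : 'I_p -> seq (R * R)) (f : {ffun 'I_p -> R}) :=
  flatten [seq tens_scale (U k) (f k) | k <- index_enum 'I_p].

Lemma Phi_nf_sum U f : (forall k : 'I_p, unit_partition k (U k)) ->
  \sum_(x <- Phi_nf U f) Phi_map p pr x.1 x.2 = f.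
Proof.
move=> hU; apply/ffunP => j; rewrite sum_ffunE big_flatten /= big_map.
transitivity (\sum_(k < p) if (j : nat) == k then f k else 0).
  apply: eq_bigr => k _; rewrite big_map -(pr_scale_sum _ (ltn_ord j) (ltn_ord k) (hU k)).
  by apply: eq_bigr => uv _; rewrite ffunE.
rewrite (bigD1 j) //= eqxx big1 ?addr0 // => k nkj.
by rewrite val_eqE eq_sym (negbTE nkj).
Qed.

Lemma te_Phi_nf U a b : (forall k : 'I_p, unit_partition k (U k)) ->
  tens_equiv (H 0) (fun _ => True) (fun _ => True) [:: (a, b)] (Phi_nf U (Phi_map p pr a b)).
Proof.
move=> hU; rewrite {1}(_ : a = \sum_(y <- [seq pr (k : 'I_p) a | k <- index_enum 'I_p]) y).
  apply: te_trans (te_addl_sum (H 0) (A := fun _ => True) (B := fun _ => True)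
    I (fun _ _ _ _ => I) I (fun _ _ => I)) _.
  rewrite -map_comp -flatten_map1 /Phi_nf; apply: te_flatten => k _ /=; rewrite ffunE.
  exact: hcomp_pair_scale (ltn_ord k) (hU k) _ _ _ (hcomp_pr _ (ltn_ord k)).
by rewrite big_map; exact: decomp_pr.
Qed.

Section UnitPartitions.
Hypothesis one_in_prodspans : forall j, (0 < j < p)%N -> prodspan (H j) (H (p - j)) 1.

Lemma exists_unit_partition k : (k < p)%N -> exists U, unit_partition k U.
Proof.
move=> kp; have [->|k0] := posnP k.
  exists [:: (1, 1)]; split; last by rewrite big_seq1 mulr1.
  by move=> c; rewrite inE => /eqP -> /=; rewrite subn0 modnn; split; exact: hcomp1.
have hk : (0 < k < p)%N by rewrite k0.
have [s [hs e]] := prodspanP (fun a n => hcompMz n kp) (one_in_prodspans hk).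
by exists s; rewrite /unit_partition modn_small // ltn_subrL k0.
Qed.

Lemma prodspan_compl_eq i : (0 < i < p)%N -> forall x, prodspan (H i) (H (p - i)) x <-> H 0 x.
Proof. by move=> hi; apply: ideal_eq_of_one (prodspan_compl_ideal hi) (one_in_prodspans hi). Qed.

Lemma powspan_of_hcomp i n c : (i < p)%N -> H ((n.+1 * i) %% p)%N c -> powspan (H i) n.+1 c.
Proof.
move=> ip; have [U [hU eU]] := exists_unit_partition ip.
elim: n c => [|n IH] c hc.
  apply: addspan_sub; exists (fun _ => c); split; last by rewrite big_ord1.
  by move=> _; rewrite mul1n modn_small in hc.
rewrite (unit_sum_expand c eU) big_seq; apply: big_ind => [|x y|uv uvU]; first exact: addspan0.
  exact: addspanD.
have [hu hv] := hU uv uvU; apply: powspan_mull hu (IH _ _).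
by apply: (hcomp_compl_mul ip (ltn_pmod _ p_gt0) hv); rewrite modnDmr -mulSn.
Qed.

Lemma powspan_eq_hcomp0 i : (i < p)%N -> forall x, powspan (H i) p x <-> H 0 x.
Proof.
move=> ip x; split; first exact: powspan_hcomp0.
by move=> hx; rewrite -(prednK p_gt0); apply: (powspan_of_hcomp ip); rewrite prednK // modnMr.
Qed.

Lemma mul_tensor_iso k l : (k < p)%N -> (l < p)%N ->
  tensor_iso (H 0) (H k) (H l) *%R (H ((k + l) %% p)%N).
Proof.
move=> kp lp; have [U [hU eU]] := exists_unit_partition kp.
have klp : ((k + l) %% p < p)%N := ltn_pmod _ p_gt0.
have hvc uv c : uv \in U -> H ((k + l) %% p)%N c -> H l (uv.2 * c).
  by move=> uvU; apply: hcomp_compl_mul kp lp (hU uv uvU).2.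
split.
- move=> s hs; rewrite big_seq; apply: big_ind => [|x y|x xs]; first exact: hcomp0 klp.
    exact: hcompD klp.
  by have [ha hb] := hs x xs; exact: hcompM.
- move=> c hc; exists (tens_scale U c); split; last by rewrite big_map; exact: unit_sum_expand.
  by move=> x /mapP [uv uvU ->]; split; [exact: (hU uv uvU).1 | exact: hvc].
- apply: (te_sum_inj (D := H ((k + l) %% p)%N) (C := tens_scale U)).
  + exact: hcomp0 klp.
  + by move=> x y; exact: hcompD klp.
  + by move=> a b; exact: hcompM kp lp.
  + by apply: te_scale0 => uv /hU [].
  + move=> x y hx hy; apply: te_scaleD => uv uvU.
    by split; [exact: (hU uv uvU).1 | exact: hvc | exact: hvc].
  + move=> a b ha hb.
    exact: hcomp_pair_scale kp (conj hU eU) (fun _ hx => hx) (fun x y => @hcompD k x y kp) hb ha.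
Qed.

Lemma Phi_tensor_iso :
  tensor_iso (H 0) (fun _ => True) (fun _ => True) (Phi_map p pr) (fun _ => True).
Proof.
have [U hU] := choice (fun k : 'I_p => exists_unit_partition (ltn_ord k)).
split=> [//|f _|]; first by exists (Phi_nf U f); split=> //; exact/esym/Phi_nf_sum.
apply: (te_sum_inj (D := fun _ => True) (C := Phi_nf U)) => // [|f g _ _|a b _ _].
- by apply: te_flatten_nil => k _; rewrite ffunE; apply: te_scale0.
- apply: te_trans (te_flatten_cat _ _ _ _ _ _) _; apply: te_flatten => k _.
  by rewrite !ffunE; exact: te_scaleD.
- exact: te_Phi_nf.
Qed.

End UnitPartitions.

End Grading.

Theorem proposition3p2 (F : fieldType) (R : comAlgType F) (p : nat)
    (pr : nat -> R -> R) :
  prime p -> Zp_grading p pr ->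
  [<->
    spec_quot_empty (hcomp pr 0) (fixed_ideal p pr);
    (forall x, fixed_ideal p pr x <-> hcomp pr 0 x);
    (forall i, (0 < i < p)%N -> forall x, powspan (hcomp pr i) p x <-> hcomp pr 0 x);
    (forall x, powspan (hcomp pr 1) p x <-> hcomp pr 0 x);
    (forall i, (0 < i < p)%N ->
       forall x, prodspan (hcomp pr i) (hcomp pr (p - i)%N) x <-> hcomp pr 0 x);
    (forall k l, (k < p)%N -> (l < p)%N ->
       tensor_iso (hcomp pr 0) (hcomp pr k) (hcomp pr l) ( *%R) (hcomp pr ((k + l) %% p)%N));
    tensor_iso (hcomp pr 0) (fun _ => True) (fun _ => True) (Phi_map p pr)
      (fun _ => True)
  ].
Proof.
move=> p_prime G; have p_gt0 := prime_gt0 p_prime; have H01 := hcomp1 p_gt0 G.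
have units_of_I1 := one_in_prodspans_of_fixed_ideal p_gt0 G p_prime.
tfae.
- move=> /(spec_quot_empty_fixed_idealP p_gt0 G).
  exact: ideal_eq_of_one (fixed_ideal_ideal p_gt0 G).
- move=> I_R0 i /andP [_ ip].
  exact: powspan_eq_hcomp0 p_gt0 G (units_of_I1 ((I_R0 1).2 H01)) i ip.
- by apply; rewrite prime_gt1.
- move=> /(_ 1) [_ /(_ H01)] /(powspan1_fixed_ideal p_gt0 G p_prime) /units_of_I1.
  exact: prodspan_compl_eq p_gt0 G.
- by move=> J_R0; apply: (mul_tensor_iso p_gt0 G) => j hj; apply/(J_R0 j hj).
- by move=> /(one_in_prodspans_of_mul_iso p_gt0 G) /(Phi_tensor_iso p_gt0 G).
- move=> /(fixed_ideal_one_of_Phi_iso p_gt0 G p_prime) I1.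
  exact/(spec_quot_empty_fixed_idealP p_gt0 G).
Qed.
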